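(* Let $(V,\mathcal{G},\mathcal{B})$ be a $(v,g,k,\lambda)_q$-GDD with $2\le g\le k$. Then $q^{k-g}$ divides $\lambda$.
   Context: Let $q$ be a prime power and $v,g,k,\lambda$ positive integers. A $(v,g,k,\lambda)_q$-GDD ($q$-analog of a group divisible design) is a triple $(V,\mathcal{G},\mathcal{B})$ where $V$ is a $v$-dimensional vector space over $\mathrm{GF}(q)$; $\mathcal{G}$ is a set of $g$-dimensional subspaces of $V$ (groups) such that every $1$-dimensional subspace of $V$ lies in exactly one element of $\mathcal{G}$, and $\#\mathcal{G}>1$; $\mathcal{B}$ is a set of $k$-dimensional subspaces of $V$ (blocks); and every $2$-dimensional subspace of $V$ is either contained in exactly one element of $\mathcal{G}$ and in no block, or contained in no element of $\mathcal{G}$ and in exactly $\lambda$ blocks. *)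

From HB Require Import structures.
From mathcomp Require Import all_boot all_order all_algebra all_field.
From mathcomp Require Import finmap.
Set Implicit Arguments. Unset Strict Implicit. Unset Printing Implicit Defensive.
Local Open Scope fset_scope.

(* V = 'rV[F]_v, the v-dimensional vector space over the finite field F
   (so q = #|F|); subspaces are MathComp's {vspace 'rV[F]_v}.
   Groups G and blocks B are finite sets of subspaces. *)
Definition is_qGDD (F : finFieldType) (v g k lam : nat)
    (G B : {fset {vspace 'rV[F]_v}}) : Prop :=
  [/\ (forall U, U \in G -> \dim U = g),
      (forall P : {vspace 'rV[F]_v}, \dim P = 1 ->
         #|` [fset U in G | (P <= U)%VS]| = 1),
      1 < #|` G|,
      (forall U, U \in B -> \dim U = k) &
      (forall L : {vspace 'rV[F]_v}, \dim L = 2 ->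
         (#|` [fset U in G | (L <= U)%VS]| = 1 /\
          #|` [fset U in B | (L <= U)%VS]| = 0)
         \/
         (#|` [fset U in G | (L <= U)%VS]| = 0 /\
          #|` [fset U in B | (L <= U)%VS]| = lam))].
Arguments is_qGDD {F} v g k lam G B.

From HB Require Import structures.
From mathcomp Require Import all_boot all_order all_algebra all_field.
From mathcomp Require Import finmap.
From mathcomp Require Import zify.
Import GRing.Theory.
Set Implicit Arguments. Unset Strict Implicit. Unset Printing Implicit Defensive.

(* Fix a point P, the group W through P, and let r be the number of blocks
   through P.  Double counting the pairs (x, U) with U a block through P and
   x in U :&: H, for a subspace H containing P, uses that P + <[x]> lies in
   lam blocks when x is outside W and in none when x is in W but not in P:
     \sum_U q ^ \dim (U :&: H) + lam * q ^ \dim (W :&: H)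
       = q * r + lam * q ^ \dim H.
   Taking H the whole space and H a hyperplane through P missing W, and
   writing r = c + d according to whether the block lies in H, the two
   identities give c * q ^ k = q * r, and then
   d * q ^ (k - g) = lam * (q ^ (v - g) - 1); since q ^ (k - g) is coprime to
   q ^ (v - g) - 1 it divides lam. *)

Section VspaceFacts.
Variables (K : fieldType) (vT : vectType K).
Implicit Types (U V H : {vspace vT}) (x : vT).

Lemma subvPn U V : ~~ (U <= V)%VS -> exists2 x, x \in U & x \notin V.
Proof.
move=> UV; have /allPn[x xU xV] : ~~ all (mem V) (vbasis U).
  by apply: contra UV => /allP/span_subvP; rewrite (span_basis (vbasisP U)).
by exists x => //; rewrite -[U](span_basis (vbasisP U)) memv_span.
Qed.

Lemma dimv_add_line U x : x \notin U -> \dim (U + <[x]>) = (\dim U).+1.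
Proof.
move=> xU; have x_neq0 : x != 0%R by apply: contraNneq xU => ->; apply: mem0v.
suff /dimv_disjoint_sum-> : (U :&: <[x]> = 0)%VS by rewrite dim_vline x_neq0 addn1.
apply/eqP; rewrite -subv0; apply/subvP => y /memv_capP[yU /vlineP[a yE]].
move: yU; rewrite yE => aU.
have [->|a_neq0] := eqVneq a 0%R; first by rewrite scale0r mem0v.
by case/negP: xU; rewrite -(scalerK a_neq0 x); apply: memvZ.
Qed.

Lemma dimv_cap_hyperplane H U :
  (\dim H).+1 = dim vT -> ~~ (U <= H)%VS -> (\dim (U :&: H)).+1 = \dim U.
Proof.
move=> dimH UH.
have H_lt : \dim H < \dim (U + H).
  rewrite ltn_neqAle dimvS ?addvSr // andbT; apply: contra UH => /eqP eqH.
  have /eqP EH : H == (U + H)%VS by rewrite eqEdim addvSr -eqH leqnn.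
  by rewrite EH addvSl.
have : \dim (U + H) <= dim vT by rewrite -dimvf dimvS ?subvf.
have := dimv_sum_cap U H; lia.
Qed.

Lemma exists_hyperplane U x : x \notin U ->
  exists H, [/\ (U <= H)%VS, (\dim H).+1 = dim vT & x \notin H].
Proof.
move=> xU; set S := (U + <[x]>)%VS; exists (U + S^C)%VS.
have US0 : (U :&: S^C = 0)%VS.
  by apply/eqP; rewrite -subv0 -(capv_compl S) capvS ?addvSl.
have dimH : (\dim (U + S^C)).+1 = dim vT.
  have : \dim S <= dim vT by rewrite -dimvf dimvS ?subvf.
  by rewrite dimv_disjoint_sum // dimv_compl dimvf dimv_add_line //; lia.
split=> //; first exact: addvSl.
apply/negP => xH; have SH : (S <= U + S^C)%VS by rewrite subv_add addvSl -memvE.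
have : (fullv <= U + S^C)%VS by rewrite -(addv_complf S) subv_add SH addvSr.
by move/dimvS; rewrite dimvf -dimH ltnn.
Qed.

End VspaceFacts.

Lemma dim_rV (R : nzSemiRingType) n : dim 'rV[R]_n = n.
Proof. by rewrite dim_matrix mul1r. Qed.

Lemma sum_memv (F : finFieldType) n (U : {vspace 'rV[F]_n}) :
  \sum_(x : 'rV[F]_n) (x \in U : nat) = #|F| ^ \dim U.
Proof.
rewrite -card_vspace -sum1_card [RHS]big_mkcond.
by apply: eq_bigr => x _; case: (x \in U).
Qed.

Lemma card_fset_sep (T : choiceType) (A : {fset T}) (p : pred T) :
  #|` [fset x in A | p x]%fset| = \sum_(x <- A) p x.
Proof.
rewrite card_fset_sum1 -big_fset_condE big_mkcond /=.
by apply: eq_bigr => x _; case: (p x).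
Qed.

Lemma point_counts_dvdn q c d lam k g v : 1 < q -> g <= k -> g < v ->
  (c + d) * q ^ k + lam * q ^ g = q * (c + d) + lam * q ^ v ->
  c * q ^ k.+1 + d * q ^ k + lam * q ^ g = q * (q * (c + d)) + lam * q ^ v ->
  q ^ (k - g) %| lam.
Proof.
move=> q_gt1 le_gk lt_gv E1 E2.
have cX : c * q ^ k = q * (c + d).
  (* E2 - E1 reads (q - 1) * (c * q ^ k) = (q - 1) * (q * (c + d)) *)
  by move: E1 E2; rewrite expnS; move: (q ^ k) (q ^ g) (q ^ v) => X Y Z; nia.
have dX : d * q ^ k + lam * q ^ g = lam * q ^ v.
  by apply/(@addnI (q * (c + d))); rewrite -E1 -cX addnA mulnDl.
have dT : d * q ^ (k - g) + lam = lam * q ^ (v - g).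
  apply/eqP; rewrite -(@eqn_pmul2r (q ^ g)) ?expn_gt0 ?(ltnW q_gt1) //.
  by rewrite mulnDl -!mulnA -!expnD !subnK ?(ltnW lt_gv) // dX.
have M_gt0 : 0 < q ^ (v - g) by rewrite expn_gt0 (ltnW q_gt1).
rewrite -(@Gauss_dvdl _ _ (q ^ (v - g)).-1).
  by rewrite -subn1 mulnBr muln1 -dT addnK dvdn_mull.
apply/coprimeXl/(@coprime_dvdl _ (q ^ (v - g))); last exact: coprimenP.
by rewrite -{1}(expn1 q) dvdn_exp2l ?subn_gt0.
Qed.

Section QGDD.
Variables (F : finFieldType) (v g k lam : nat) (G B : {fset {vspace 'rV[F]_v}}).
Hypothesis gdd : is_qGDD v g k lam G B.
Local Notation q := #|F|.
Implicit Types (P W H U : {vspace 'rV[F]_v}) (x : 'rV[F]_v).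

Lemma group_dim_lt : g < v.
Proof.
case: gdd => dimG _ card_G _ _; rewrite ltnNge; apply/negP => le_vg.
have : (G `<=` [fset fullv])%fset.
  apply/fsubsetP => U UG; rewrite inE eqEdim subvf dimvf dim_rV dimG //.
by move/fsubset_leq_card; rewrite cardfs1 leqNgt card_G.
Qed.

Lemma exists_group_through_point P :
  \dim P = 1 -> exists2 W, W \in G & (P <= W)%VS.
Proof.
case: gdd => _ point_G _ _ _ /point_G/eqP/cardfs1P[W EW].
have : W \in [fset U in G | (P <= U)%VS]%fset by rewrite EW inE.
by rewrite !inE => /andP[WG PW]; exists W.
Qed.

Lemma group_through_point_unique P W1 W2 : \dim P = 1 ->
  W1 \in G -> (P <= W1)%VS -> W2 \in G -> (P <= W2)%VS -> W1 = W2.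
Proof.
case: gdd => _ point_G _ _ _ /point_G/eqP/cardfs1P[W EW] W1G PW1 W2G PW2.
have : W1 \in [fset U in G | (P <= U)%VS]%fset by rewrite !inE W1G.
have : W2 \in [fset U in G | (P <= U)%VS]%fset by rewrite !inE W2G.
by rewrite EW !inE => /eqP-> /eqP->.
Qed.

Variables (P W : {vspace 'rV[F]_v}).
Hypotheses (dimP : \dim P = 1) (WG : W \in G) (PW : (P <= W)%VS).

Lemma card_blocks_through_line x : x \notin P ->
  #|` [fset U in B | (P + <[x]> <= U)%VS]%fset| = if x \in W then 0 else lam.
Proof.
move=> xP; have dimL : \dim (P + <[x]>) = 2 by rewrite dimv_add_line ?dimP.
case: gdd => _ _ _ _ /(_ _ dimL)[[card_G ->]|[card_G ->]]; case: ifPn => // xW.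
  have /cardfs1P[W' EW'] : #|` [fset U in G | (P + <[x]> <= U)%VS]%fset| == 1.
    by rewrite card_G.
  have : W' \in [fset U in G | (P + <[x]> <= U)%VS]%fset by rewrite EW' inE.
  rewrite !inE subv_add -memvE => /and3P[W'G PW' xW'].
  by rewrite (group_through_point_unique dimP WG PW W'G PW') xW' in xW.
have : W \in [fset U in G | (P + <[x]> <= U)%VS]%fset.
  by rewrite !inE subv_add -memvE WG PW.
by rewrite (cardfs0_eq card_G) inE.
Qed.

Lemma count_through_point H : (P <= H)%VS ->
  \sum_(U <- B | (P <= U)%VS) q ^ \dim (U :&: H) + lam * q ^ \dim (W :&: H)
  = q * \sum_(U <- B | (P <= U)%VS) 1 + lam * q ^ \dim H.
Proof.
move=> PH.
have pointwise x :
    \sum_(U <- B | (P <= U)%VS) (x \in U :&: H)%VS + lam * (x \in W :&: H)%VS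
    = (\sum_(U <- B | (P <= U)%VS) 1) * (x \in P) + lam * (x \in H).
  have [xP | xP] := boolP (x \in P).
    rewrite memv_cap (subvP PW) ?(subvP PH) //= !muln1; congr (_ + _).
    by apply: eq_bigr => U PU; rewrite memv_cap (subvP PU) ?(subvP PH).
  have -> : \sum_(U <- B | (P <= U)%VS) (x \in U :&: H)%VS
      = (x \in H) * #|` [fset U in B | (P + <[x]> <= U)%VS]%fset|.
    rewrite card_fset_sep big_distrr big_mkcond /=; apply: eq_bigr => U _.
    rewrite memv_cap subv_add -memvE.
    by case: (P <= U)%VS; case: (x \in U); case: (x \in H).
  rewrite card_blocks_through_line // memv_cap muln0 add0n.
  by case: (x \in W); case: (x \in H); rewrite ?muln0 ?mul0n ?muln1 ?mul1n ?addn0.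
transitivity (\sum_x (\sum_(U <- B | (P <= U)%VS) (x \in U :&: H)%VS
                     + lam * (x \in W :&: H)%VS)).
  rewrite big_split /= -big_distrr /= sum_memv exchange_big /=.
  by congr (_ + _); apply: eq_bigr => U _; rewrite sum_memv.
rewrite (eq_bigr _ (fun x _ => pointwise x)) big_split /= -!big_distrr /=.
by rewrite !sum_memv dimP expn1 mulnC.
Qed.

Lemma count_fullv :
  (\sum_(U <- B | (P <= U)%VS) 1) * q ^ k + lam * q ^ g
  = q * \sum_(U <- B | (P <= U)%VS) 1 + lam * q ^ v.
Proof.
case: gdd => dimG _ _ dimB _.
have := count_through_point (subvf P); rewrite capvf dimvf dim_rV dimG // => <-.
rewrite big_distrl /=; congr (_ + _); rewrite big_seq_cond [RHS]big_seq_cond.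
by apply: eq_bigr => U /andP[UB _]; rewrite capvf dimB ?mul1n.
Qed.

Lemma count_hyperplane H : (P <= H)%VS -> (\dim H).+1 = v -> ~~ (W <= H)%VS ->
  (\sum_(U <- B | (P <= U)%VS && (U <= H)%VS) 1) * q ^ k.+1
  + (\sum_(U <- B | (P <= U)%VS && ~~ (U <= H)%VS) 1) * q ^ k + lam * q ^ g
  = q * (q * \sum_(U <- B | (P <= U)%VS) 1) + lam * q ^ v.
Proof.
move=> PH dimH WH; case: gdd => dimG _ _ dimB _.
have hypH : (\dim H).+1 = dim 'rV[F]_v by rewrite dim_rV.
have := congr1 (muln q) (count_through_point PH).
rewrite !mulnDr ![q * (lam * _)]mulnCA -!expnS dimH.
rewrite (dimv_cap_hyperplane hypH WH) dimG // => <-; congr (_ + _).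
rewrite big_distrr [RHS](bigID (fun U => U <= H)%VS) /=.
congr (_ + _); rewrite big_distrl big_seq_cond [RHS]big_seq_cond /=;
  apply: eq_bigr => U /andP[UB /andP[_ UH]].
  by rewrite (capv_idPl UH) dimB // mul1n expnS.
by rewrite -expnS dimv_cap_hyperplane // dimB // mul1n.
Qed.
End QGDD.

Theorem lemma7 (F : finFieldType) (v g k lam : nat)
    (G B : {fset {vspace 'rV[F]_v}}) :
  0 < v -> 0 < g -> 0 < k -> 0 < lam ->
  is_qGDD v g k lam G B ->
  2 <= g <= k ->
  #|F| ^ (k - g) %| lam.
Proof.
move=> v_gt0 _ _ _ gdd /andP[g_ge2 le_gk].
have [P dimP] : exists P : {vspace 'rV[F]_v}, \dim P = 1.
  exists <[vpick fullv]>%VS.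
  by rewrite dim_vline vpick0 -dimv_eq0 dimvf dim_rV -lt0n v_gt0.
have [W WG PW] := exists_group_through_point gdd dimP.
have WP : ~~ (W <= P)%VS.
  case: gdd => dimG _ _ _ _; apply: contraL g_ge2 => /dimvS.
  by rewrite dimP dimG // -leqNgt.
have [w wW wP] := subvPn WP.
have [H [PH dimH wH]] := exists_hyperplane wP; rewrite dim_rV in dimH.
have WH : ~~ (W <= H)%VS by apply: contra wH => /subvP; apply.
have := count_hyperplane gdd dimP WG PW PH dimH WH.
rewrite [in RHS](bigID (fun U => U <= H)%VS) /= => count_H.
apply: point_counts_dvdn (finNzRing_gt1 F) le_gk (group_dim_lt gdd) _ count_H.
by rewrite -(bigID (fun U => U <= H)%VS) (count_fullv gdd dimP WG PW).
Qed.
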